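(* Let $n,m,k,l$ be non-negative integers with $m,k\le n$ and $m+k-n\le l\le\min(m,k)$. Then $p(x\mid n,m,k,l)=0$ for every integer $x$ with $\min(m,\,n-m,\,k)<x\le\lfloor n/2\rfloor$.
   Context: Let $M:=m-l$, $N:=n-m-k+l$. Let $\mathbb{C}^2$ have orthonormal basis $|0\rangle,|1\rangle$ and give $(\mathbb{C}^2)^{\otimes n}$ the induced Hermitian inner product. Define $|\Xi_{n,m|k,l}\rangle:=|1\rangle^{\otimes l}\otimes|0\rangle^{\otimes(k-l)}\otimes\binom{M+N}{M}^{-1/2}\sum_{I}|I\rangle$, the sum over all $I\in\{0,1\}^{n-k}$ with exactly $M$ ones (where $|i_1\cdots i_r\rangle=|i_1\rangle\otimes\cdots\otimes|i_r\rangle$). $\mathfrak S_n$ acts on $(\mathbb{C}^2)^{\otimes n}$ by permuting tensor factors. For $0\le x\le\lfloor n/2\rfloor$, $\mathsf P_{(n-x,x)}$ is the orthogonal projection onto the isotypic component of the irreducible $\mathfrak S_n$-representation labelled by the partition $(n-x,x)$, and $p(x\mid n,m,k,l):=\langle\Xi_{n,m|k,l}|\mathsf P_{(n-x,x)}|\Xi_{n,m|k,l}\rangle$. *)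

From HB Require Import structures.
From mathcomp Require Import all_boot all_order all_algebra all_fingroup all_field.
From Stdlib Require Import ClassicalEpsilon.
Unset Strict Implicit. Unset Printing Implicit Defensive.
Import Order.TTheory GRing.Theory Num.Theory.
Local Open Scope ring_scope.

(* Basis vectors |i_1 ... i_n> are indexed by bit strings f : 'I_n -> bool,
   position j (0-based) being the j-th tensor factor (true = |1>). *)
Definition bits (n : nat) := {ffun 'I_n -> bool}.
Notation Vn n := ('rV[algC]_(#|{ffun 'I_n -> bool}|)).

Definition ket (n : nat) (f : {ffun 'I_n -> bool}) : Vn n :=
  delta_mx 0 (enum_rank f).

Definition dotV (N : nat) (u v : 'rV[algC]_N) : algC :=
  \sum_(i < N) (u 0 i)^* * v 0 i.

(* S_n acts by permuting tensor factors: the factor in position j is moved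
   to position s j.  Row-vector convention: ket f *m repV s = ket (s.f). *)
Definition permbits (n : nat) (s : 'S_n) (f : {ffun 'I_n -> bool}) :
  {ffun 'I_n -> bool} := [ffun j => f ((s^-1)%g j)].

Definition repV (n : nat) (s : 'S_n) : 'M[algC]_(#|{ffun 'I_n -> bool}|) :=
  \matrix_(i, j) ((permbits n s (enum_val i) == enum_val j)%:R).

(* Permutation module M^{(n-x,x)}: a tabloid of shape (n-x,x) is identified
   with the set of entries of its second row; we take as ambient space the
   functions on all subsets of 'I_n (tabloids are the x-subsets). *)
Notation Mn n := ('rV[algC]_(#|{set 'I_n}|)).

Definition ketS (n : nat) (Y : {set 'I_n}) : Mn n := delta_mx 0 (enum_rank Y).

Definition repM (n : nat) (s : 'S_n) : 'M[algC]_(#|{set 'I_n}|) :=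
  \matrix_(i, j) ((s @: (enum_val i : {set 'I_n}) == (enum_val j : {set 'I_n}))%:R).

(* A tableau of shape (n-x,x) determines (up to the irrelevant order of the
   remaining first-row entries) columns (a i, b i), i < x, with a i in the
   first row and b i in the second row; all 2x entries are distinct. *)
Definition pairf (n x : nat) (a b : 'I_x -> 'I_n) (u : 'I_x + 'I_x) : 'I_n :=
  match u with inl i => a i | inr i => b i end.

(* Polytabloid e_t = sum over the column group of sign * {c t}. *)
Definition polytab (n x : nat) (a b : 'I_x -> 'I_n) : Mn n :=
  \sum_(S : {set 'I_x})
     (-1) ^+ #|S| *: ketS n [set (if i \in S then a i else b i) | i : 'I_x].

Definition Specht (n x : nat) : 'M[algC]_(#|{set 'I_n}|) :=
  (\sum_(ab : {ffun 'I_x -> 'I_n} * {ffun 'I_x -> 'I_n}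
          | injectiveb (pairf n x ab.1 ab.2))
      <<polytab n x ab.1 ab.2>>)%MS.

Definition equivariant (n : nat)
    (phi : 'M[algC]_(#|{set 'I_n}|, #|{ffun 'I_n -> bool}|)) : Prop :=
  forall s : 'S_n, repM n s *m phi = phi *m repV n s.

(* The isotypic component of S^{(n-x,x)} in (C^2)^{(x)n}: the sum of the
   images of all S_n-equivariant linear maps from S^{(n-x,x)} to (C^2)^{(x)n}
   (every such map is the restriction of an equivariant map on M^{(n-x,x)}). *)
Definition in_isotypic (n x : nat) (v : Vn n) : Prop :=
  exists (K : nat)
         (phi : 'I_K -> 'M[algC]_(#|{set 'I_n}|, #|{ffun 'I_n -> bool}|))
         (u : 'I_K -> Mn n),
    (forall j, equivariant n (phi j) /\ (u j <= Specht n x)%MS) /\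
    v = \sum_(j < K) u j *m phi j.

Definition is_isoproj (n x : nat) (v w : Vn n) : Prop :=
  in_isotypic n x w /\ forall y, in_isotypic n x y -> dotV _ y (v - w) = 0.

Definition isoproj (n x : nat) (v : Vn n) : Vn n :=
  epsilon (inhabits 0) (is_isoproj n x v).

Definition bigM (m l : nat) : nat := (m - l)%N.
Definition bigN (n m k l : nat) : nat := ((n + l) - (m + k))%N.

Definition Xi (n m k l : nat) : Vn n :=
  (sqrtC ('C(bigM m l + bigN n m k l, bigM m l)%:R : algC))^-1 *:
  \sum_(f : {ffun 'I_n -> bool}
        | [forall j : 'I_n, ((j < l)%N ==> f j)
                             && (((l <= j)%N && (j < k)%N) ==> ~~ f j)]
          && (#|[set j : 'I_n | (k <= j)%N && f j]| == bigM m l))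
     ket n f.

Definition prob (x n m k l : nat) : algC :=
  dotV _ (Xi n m k l) (isoproj n x (Xi n m k l)).

From mathcomp Require Import all_boot all_order all_algebra all_fingroup all_field.
From mathcomp Require Import zify.
From Stdlib Require Import ClassicalEpsilon.
Unset Strict Implicit. Unset Printing Implicit Defensive.
Import Order.TTheory GRing.Theory Num.Theory.
Local Open Scope ring_scope.

(* Xi is orthogonal to the whole isotypic component of S^(n-x,x), so its
   projection onto it vanishes. Up to a scalar Xi is the indicator of a set F
   of bit strings, so it suffices that for every equivariant phi and every
   polytabloid e_t the entries of e_t phi sum to zero over F. Swapping the two
   entries of a column of t negates e_t, so the entry of e_t phi at f is minus
   its entry at f with that column swapped. If k < x, some column of t lies in
   the positions >= k; swapping it preserves F and the sum cancels in pairs.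
   Otherwise min(m, n-m) < x, and as every f in F has exactly m ones, f is
   constant on some column by pigeonhole, so its entry is zero. *)

Lemma sum_opp_involution {R : numDomainType} {I : finType} {P : pred I}
    {h : I -> I} {F : I -> R} :
  involutive h -> (forall i, P (h i) = P i) ->
  (forall i, P i -> F (h i) = - F i) -> \sum_(i | P i) F i = 0.
Proof.
move=> hK Ph Fh; apply/eqP; rewrite -eqNr -sumrN; apply/eqP.
rewrite [RHS](reindex_inj (inv_inj hK)) /=.
by apply: eq_big => [i | i Pi]; rewrite ?Ph ?Fh.
Qed.

Lemma card_ord_ltn {n l : nat} : (l <= n)%N -> #|[set j : 'I_n | (j < l)%N]| = l.
Proof.
move=> ln.
have -> : [set j : 'I_n | (j < l)%N] = [set widen_ord ln i | i : 'I_l].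
  apply/setP => j; rewrite inE; apply/idP/imsetP => [jl | [i _ ->]].
    by exists (Ordinal jl); last exact: val_inj.
  by rewrite /= ltn_ord.
have widen_inj : injective (widen_ord ln) by move=> u v /(congr1 val) /= /val_inj.
by rewrite (card_imset _ widen_inj) card_ord.
Qed.

Lemma dotV_conj (N : nat) (u v : 'rV[algC]_N) : dotV _ u v = (dotV _ v u)^*.
Proof.
rewrite /dotV rmorph_sum; apply: eq_bigr => i _.
by rewrite rmorphM /= conjCK mulrC.
Qed.

Section Permbits.

Context {n : nat}.
Implicit Types (s : 'S_n) (f : {ffun 'I_n -> bool}).

Lemma permbitsK s : cancel (permbits n s) (permbits n s^-1).
Proof. by move=> f; apply/ffunP => j; rewrite !ffunE invgK permK. Qed.

Lemma permbitsKV s : cancel (permbits n s^-1) (permbits n s).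
Proof. by move=> f; apply/ffunP => j; rewrite !ffunE invgK permKV. Qed.

Lemma permbits_tpermK (p q : 'I_n) : involutive (permbits n (tperm p q)).
Proof. by move=> f; rewrite -{2}[tperm p q]tpermV permbitsKV. Qed.

Lemma permbits_tperm_id {p q : 'I_n} {f} : f p = f q -> permbits n (tperm p q) f = f.
Proof.
move=> fpq; apply/ffunP => j; rewrite ffunE tpermV.
by case: tpermP => [->|->|//]; rewrite fpq.
Qed.

Lemma mulmx_repV_ket (v : Vn n) s f :
  (v *m repV n s) 0 (enum_rank f) = v 0 (enum_rank (permbits n s^-1 f)).
Proof.
rewrite mxE (bigD1 (enum_rank (permbits n s^-1 f))) //= big1 => [|i ne].
  by rewrite mxE !enum_rankK permbitsKV eqxx mulr1 addr0.
rewrite mxE enum_rankK (can2_eq (permbitsK s) (permbitsKV s)).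
by rewrite (can2_eq (@enum_valK _) (@enum_rankK _)) (negbTE ne) mulr0.
Qed.

Lemma ketS_mulmx_repM s (Y : {set 'I_n}) : ketS n Y *m repM n s = ketS n (s @: Y).
Proof.
apply/matrixP => i j; rewrite /ketS -rowE !mxE ord1 enum_rankK eqxx /=.
by rewrite -(can2_eq (@enum_rankK _) (@enum_valK _)) eq_sym.
Qed.

End Permbits.

Definition Xi_support (n m k l : nat) (f : {ffun 'I_n -> bool}) : bool :=
  [forall j : 'I_n, ((j < l)%N ==> f j) && (((l <= j)%N && (j < k)%N) ==> ~~ f j)]
  && (#|[set j : 'I_n | (k <= j)%N && f j]| == bigM m l).

Lemma Xi_support_weight {n m k l : nat} {f : {ffun 'I_n -> bool}} :
  (k <= n)%N -> (l <= minn m k)%N -> Xi_support n m k l f ->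
  #|[set j : 'I_n | f j]| = m.
Proof.
move=> kn; rewrite leq_min => /andP [lm lk] /andP [/forallP f_pattern /eqP tail_ones].
have -> : [set j : 'I_n | f j]
          = [set j : 'I_n | (j < l)%N] :|: [set j : 'I_n | (k <= j)%N && f j].
  apply/setP => j; rewrite !inE; have /andP [head tail] := f_pattern j.
  case: (ltnP j l) => [jl | lj]; first by rewrite (implyP head jl).
  by case: (ltnP j k) => [jk | //]; rewrite (negbTE (implyP tail _)) ?lj.
rewrite cardsU card_ord_ltn ?(leq_trans lk) // tail_ones /bigM.
have -> : [set j : 'I_n | (j < l)%N] :&: [set j : 'I_n | (k <= j)%N && f j] = set0.
  apply/setP => j; rewrite !inE; case: (ltnP j l) => [jl | //].
  by rewrite leqNgt (leq_trans jl lk).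
by rewrite cards0 subn0 subnKC.
Qed.

Lemma Xi_support_tperm (n m k l : nat) (p q : 'I_n) (f : {ffun 'I_n -> bool}) :
  (l <= k)%N -> (k <= p)%N -> (k <= q)%N ->
  Xi_support n m k l (permbits n (tperm p q) f) = Xi_support n m k l f.
Proof.
move=> lk kp kq; rewrite /Xi_support; congr (_ && _).
  apply: eq_forallb => j; rewrite ffunE tpermV.
  case: (ltnP j k) => [jk | kj]; last by rewrite ltnNge (leq_trans lk kj) andbF.
  by rewrite tpermD // neq_ltn (leq_trans jk) ?orbT.
have -> : [set j : 'I_n | (k <= j)%N && permbits n (tperm p q) f j]
          = tperm p q @^-1: [set j : 'I_n | (k <= j)%N && f j].
  apply/setP => j; rewrite !inE ffunE tpermV.
  by case: tpermP => [->|->|//]; rewrite kp kq.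
by rewrite card_preimset //; exact: perm_inj.
Qed.

Definition toggle {x : nat} (i : 'I_x) (S : {set 'I_x}) : {set 'I_x} :=
  [set j | (j == i) (+) (j \in S)].

Lemma toggleK {x : nat} (i : 'I_x) : involutive (toggle i).
Proof. by move=> S; apply/setP => j; rewrite !inE addbA addbb. Qed.

Lemma sign_toggle (R : pzRingType) {x : nat} (i : 'I_x) (S : {set 'I_x}) :
  (-1) ^+ #|toggle i S| = - (-1) ^+ #|S| :> R.
Proof.
have toggleD1 : toggle i S :\ i = S :\ i.
  by apply/setP => j; rewrite !inE; case: eqP.
rewrite (cardsD1 i S) (cardsD1 i (toggle i S)) toggleD1 !inE eqxx.
by case: (i \in S); rewrite /= exprS ?mulN1r ?opprK.
Qed.

Section Columns.

Context {n x : nat} {a b : 'I_x -> 'I_n}.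
Hypothesis ab_inj : injective (pairf n x a b).

Lemma leq_card_column_choice (c : 'I_x -> bool) (A : {set 'I_n}) :
  (forall i, (if c i then a i else b i) \in A) -> (x <= #|A|)%N.
Proof.
move=> cA.
have c_inj : injective (fun i => if c i then a i else b i).
  move=> i j eij; have : pairf n x a b (if c i then inl i else inr i)
                       = pairf n x a b (if c j then inl j else inr j).
    by case: (c i) eij; case: (c j).
  by move/ab_inj; case: (c i); case: (c j) => // -[].
rewrite -[x]card_ord -(card_imset _ c_inj); apply: subset_leq_card.
by apply/subsetP => _ /imsetP [i _ ->].
Qed.

Lemma exists_column_geq {k : nat} :
  (k <= n)%N -> (k < x)%N -> exists i, (k <= a i)%N && (k <= b i)%N.
Proof.
move=> kn kx; apply/existsP; apply: contraLR kx => /existsPn col_lt.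
rewrite -leqNgt -(card_ord_ltn kn).
apply: (@leq_card_column_choice (fun i => a i < k)%N) => i.
rewrite inE; case: (ltnP (a i) k) => //= ka.
by move: (col_lt i); rewrite ka /= -ltnNge.
Qed.

Lemma exists_column_const (f : {ffun 'I_n -> bool}) :
  (minn #|[set j | f j]| (n - #|[set j | f j]|) < x)%N ->
  exists i, f (a i) = f (b i).
Proof.
move=> x_gt.
case: (boolP [exists i, f (a i) == f (b i)]) => [/existsP [i /eqP] | /existsPn col_ne].
  by exists i.
have ones : (x <= #|[set j | f j]|)%N.
  apply: (@leq_card_column_choice (fun i => f (a i))) => i.
  by rewrite inE; case: ifP => // fa; move: (col_ne i); rewrite fa; case: (f (b i)).
have zeros : (x <= #|~: [set j | f j]|)%N.
  apply: (@leq_card_column_choice (fun i => ~~ f (a i))) => i.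
  rewrite !inE; case: ifP => // /negbFE fa.
  by move: (col_ne i); rewrite fa; case: (f (b i)).
have coweight : (n - #|[set j | f j]| = #|~: [set j | f j]|)%N.
  by rewrite -[n in (n - _)%N]card_ord -(cardsC [set j | f j]) addKn.
by move: x_gt; rewrite coweight ltnNge leq_min ones zeros.
Qed.

(* The second row of the tabloid of t after flipping the columns in S. *)
Definition second_row (S : {set 'I_x}) : {set 'I_n} :=
  [set (if i \in S then a i else b i) | i : 'I_x].

Lemma tperm_second_row (i : 'I_x) (S : {set 'I_x}) :
  tperm (a i) (b i) @: second_row S = second_row (toggle i S).
Proof.
rewrite /second_row -imset_comp; apply: eq_imset => j /=; rewrite inE.
have [-> | ne] := eqVneq j i; first by case: (i \in S); rewrite ?tpermL ?tpermR.
have entry_eq := inj_eq ab_inj.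
rewrite tpermD //; case: (j \in S);
  by rewrite ?(entry_eq (inl i) (inl j)) ?(entry_eq (inr i) (inl j))
             ?(entry_eq (inl i) (inr j)) ?(entry_eq (inr i) (inr j)) // eq_sym.
Qed.

Lemma polytab_mulmx_tperm (i : 'I_x) :
  polytab n x a b *m repM n (tperm (a i) (b i)) = - polytab n x a b.
Proof.
rewrite /polytab mulmx_suml -sumrN (reindex_inj (inv_inj (toggleK i))) /=.
apply: eq_bigr => S _; rewrite -scalemxAl ketS_mulmx_repM.
by rewrite -/(second_row (toggle i S)) tperm_second_row toggleK sign_toggle scaleNr.
Qed.

Lemma polytab_mulmx_antisym (phi : 'M[algC]_(#|{set 'I_n}|, #|{ffun 'I_n -> bool}|))
    (i : 'I_x) (f : {ffun 'I_n -> bool}) :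
  equivariant n phi ->
  (polytab n x a b *m phi) 0 (enum_rank (permbits n (tperm (a i) (b i)) f))
  = - (polytab n x a b *m phi) 0 (enum_rank f).
Proof.
move=> phi_eq; set w := polytab n x a b *m phi.
have w_antisym : w = - (w *m repV n (tperm (a i) (b i))).
  by rewrite -mulmxA -phi_eq mulmxA polytab_mulmx_tperm mulNmx opprK.
by rewrite {1}w_antisym mxE mulmx_repV_ket tpermV permbits_tpermK.
Qed.

Lemma sum_Xi_support_antisym (R : numDomainType) (F : {ffun 'I_n -> bool} -> R)
    (m k l : nat) :
  (k <= n)%N -> (l <= minn m k)%N -> (minn (minn m (n - m)) k < x)%N ->
  (forall i f, F (permbits n (tperm (a i) (b i)) f) = - F f) ->
  \sum_(f | Xi_support n m k l f) F f = 0.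
Proof.
move=> kn lmk x_gt F_antisym.
case: (ltnP k x) => [kx | xk].
  have [i /andP [ka kb]] := exists_column_geq kn kx.
  apply: (sum_opp_involution (permbits_tpermK (a i) (b i))) => [f | f _].
    by apply: Xi_support_tperm; move: lmk; rewrite leq_min => /andP [].
  exact: F_antisym.
apply: big1 => f f_supp; apply/eqP; rewrite -eqNr.
have [i fi] : exists i, f (a i) = f (b i).
  apply: exists_column_const; rewrite (Xi_support_weight kn lmk f_supp).
  by move: x_gt xk; lia.
by rewrite -{1}(permbits_tperm_id fi) F_antisym opprK.
Qed.

End Columns.

Lemma Specht_mulmx_eq0 {n x p : nat} {C : 'M[algC]_(#|{set 'I_n}|, p)} {u : Mn n} :
  (forall a b : 'I_x -> 'I_n, injective (pairf n x a b) -> polytab n x a b *m C = 0) ->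
  (u <= Specht n x)%MS -> u *m C = 0.
Proof.
move=> polytab_C uS; apply/sub_kermxP; apply: submx_trans uS _.
apply/sumsmx_subP => ab /injectiveP ab_inj; rewrite genmxE; apply/sub_kermxP.
exact: polytab_C.
Qed.

Lemma sum_Xi_support_Specht {n m k l x : nat}
    {phi : 'M[algC]_(#|{set 'I_n}|, #|{ffun 'I_n -> bool}|)} {u : Mn n} :
  equivariant n phi -> (k <= n)%N -> (l <= minn m k)%N ->
  (minn (minn m (n - m)) k < x)%N -> (u <= Specht n x)%MS ->
  \sum_(f | Xi_support n m k l f) (u *m phi) 0 (enum_rank f) = 0.
Proof.
move=> phi_eq kn lmk x_gt uS.
pose C := phi *m \sum_(f | Xi_support n m k l f) (ket n f)^T.
have sum_C (v : Mn n) :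
    \sum_(f | Xi_support n m k l f) (v *m phi) 0 (enum_rank f) = (v *m C) 0 0.
  rewrite mulmxA mulmx_sumr summxE; apply: eq_bigr => f _.
  by rewrite /ket trmx_delta -colE [RHS]mxE.
rewrite sum_C (Specht_mulmx_eq0 _ uS) ?mxE // => a b ab_inj.
apply/matrixP => ? ?; rewrite !ord1 [RHS]mxE -sum_C.
apply: (sum_Xi_support_antisym ab_inj) => // i f.
exact: polytab_mulmx_antisym.
Qed.

Lemma dotV_Xi (n m k l : nat) (y : Vn n) :
  dotV _ y (Xi n m k l) =
  (sqrtC ('C(bigM m l + bigN n m k l, bigM m l)%:R))^-1 *
  (\sum_(f | Xi_support n m k l f) y 0 (enum_rank f))^*.
Proof.
rewrite /Xi /dotV rmorph_sum.
under eq_bigr => i _ do rewrite mxE summxE mulrCA mulr_sumr.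
rewrite -mulr_sumr exchange_big /=; congr (_ * _); apply: eq_bigr => f _.
rewrite (bigD1 (enum_rank f)) //= big1 => [|i ne].
  by rewrite addr0 /ket mxE !eqxx mulr1.
by rewrite /ket mxE (negbTE ne) andbF mulr0.
Qed.

Lemma Xi_orthogonal_isotypic (n m k l x : nat) (y : Vn n) :
  (k <= n)%N -> (l <= minn m k)%N -> (minn (minn m (n - m)) k < x)%N ->
  in_isotypic n x y -> dotV _ y (Xi n m k l) = 0.
Proof.
move=> kn lmk x_gt [K [phi [u [phi_u ->]]]].
rewrite dotV_Xi; under eq_bigr do rewrite summxE.
rewrite exchange_big /= big1 ?rmorph0 ?mulr0 // => j _.
have [phi_eq uS] := phi_u j; exact: sum_Xi_support_Specht phi_eq kn lmk x_gt uS.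
Qed.

Lemma dotV_isoproj_eq0 (n x : nat) (v : Vn n) :
  (forall y, in_isotypic n x y -> dotV _ y v = 0) -> dotV _ v (isoproj n x v) = 0.
Proof.
move=> v_orth.
have zero_proj : is_isoproj n x v 0.
  split; last by move=> y /v_orth; rewrite subr0.
  by exists 0%N, (fun _ => 0), (fun _ => 0); split; [case | rewrite big_ord0].
have [proj_iso _] : is_isoproj n x v (isoproj n x v) by apply: epsilon_spec; exists 0.
by rewrite dotV_conj v_orth ?rmorph0.
Qed.

Theorem corollary4p11 (n m k l x : nat) :
  (m <= n)%N -> (k <= n)%N ->
  (m + k - n <= l)%N -> (l <= minn m k)%N ->
  (minn (minn m (n - m)) k < x)%N -> (x <= n./2)%N ->
  prob x n m k l = 0.
Proof.
(* The other hypotheses only make Xi nonzero and (n-x,x) a partition. *)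
move=> _ kn _ lmk x_gt _; apply: dotV_isoproj_eq0 => y.
exact: Xi_orthogonal_isotypic.
Qed.
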